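(* Let $\mathfrak n=\mathfrak v\oplus\mathfrak z$ be a Lie algebra of Heisenberg type and let $\mathcal L\subset\mathfrak v$ be a Lagrangian subspace. Then $\mathcal L^\perp$ (orthogonal complement in $\mathfrak v$) is also Lagrangian, $\mathfrak v=\mathcal L\oplus\mathcal L^\perp$, and $J_z(\mathcal L)=\mathcal L^\perp$ for every non-zero $z\in\mathfrak z$.
   Context: Lie algebra of Heisenberg type: $\mathfrak z=\mathbb R^m$ with standard inner product $\langle\cdot,\cdot\rangle$; $\mathfrak v$ is a finite-dimensional real module over the Clifford algebra $C(m)$ (relations $z^2=-\langle z,z\rangle 1$) with an inner product $(\cdot,\cdot)$ for which each $J_z$ (action of $z$) is skew-symmetric; $\mathfrak n=\mathfrak v\oplus\mathfrak z$ has $\mathfrak z$ central and bracket on $\mathfrak v$ defined by $\langle z,[u,v]\rangle=(J_zu,v)$. A Lagrangian subspace is a subspace $\mathcal L\subset\mathfrak v$ with $[\mathcal L,\mathcal L]=0$ and $\dim\mathcal L=\tfrac12\dim\mathfrak v$. *)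

(* Vectors of v are row vectors 'rV[R]_n; z = R^m as 'rV[R]_m. *)
From mathcomp Require Import all_boot all_order all_algebra.
From mathcomp Require Import reals.
Set Implicit Arguments. Unset Strict Implicit. Unset Printing Implicit Defensive.
Import Order.TTheory GRing.Theory Num.Theory.
Local Open Scope ring_scope.

Section HType.
Variables (R : realType) (m n : nat).

Definition zdot (z w : 'rV[R]_m) : R := (z *m w^T) 0 0.

Definition vdot (G : 'M[R]_n) (u w : 'rV[R]_n) : R := (u *m G *m w^T) 0 0.

Definition inner_product (G : 'M[R]_n) : Prop :=
  G^T = G /\ forall u : 'rV[R]_n, u != 0 -> 0 < vdot G u u.

(* action J_z of z, determined linearly by the action J i of the basis e_i;
   J_z u is written u *m Jz J z (right action on row vectors) *)
Definition Jz (J : 'I_m -> 'M[R]_n) (z : 'rV[R]_m) : 'M[R]_n :=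
  \sum_(i < m) z 0 i *: J i.

Definition heisenberg_type (G : 'M[R]_n) (J : 'I_m -> 'M[R]_n) : Prop :=
  [/\ inner_product G,
      (forall z, Jz J z *m Jz J z = - (zdot z z)%:M) &
      (forall z u w, vdot G (u *m Jz J z) w = - vdot G u (w *m Jz J z))].

(* bracket [u,w] in z, characterized by <z,[u,w]> = (J_z u, w):
   its i-th coordinate is <e_i,[u,w]> = (J_{e_i} u, w). *)
Definition bracket (G : 'M[R]_n) (J : 'I_m -> 'M[R]_n) (u w : 'rV[R]_n)
  : 'rV[R]_m := \row_i vdot G (u *m J i) w.

(* subspaces of v are represented by row spaces of n x n matrices *)
Definition lagrangian (G : 'M[R]_n) (J : 'I_m -> 'M[R]_n) (L : 'M[R]_n) : Prop :=
  (forall u w : 'rV[R]_n, (u <= L)%MS -> (w <= L)%MS -> bracket G J u w = 0)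
  /\ (\rank L * 2 = n)%N.

Definition vperp (G : 'M[R]_n) (L : 'M[R]_n) : 'M[R]_n := kermx (G *m L^T).

End HType.

From mathcomp Require Import all_boot all_order all_algebra.
From mathcomp Require Import reals.
Set Implicit Arguments. Unset Strict Implicit. Unset Printing Implicit Defensive.
Import Order.TTheory GRing.Theory Num.Theory.
Local Open Scope ring_scope.

(* For l, l' in L we have (J_z l, l') = <z, [l, l']> = 0, so J_z maps L into
   its orthogonal complement; J_z is invertible because J_z^2 = -|z|^2, and
   L^perp has the complementary dimension n/2, hence J_z L = L^perp.  Positive
   definiteness makes L and L^perp meet only in 0, so v = L (+) L^perp.
   Finally, writing vectors of L^perp as J_k l with l in L, skew-symmetry and
   J_k^2 = -1 turn the k-th coordinate of their bracket into that of a bracket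
   in L. *)

Lemma row_free_sqr_scalar (F : fieldType) (k : nat) (A : 'M[F]_k) (c : F) :
  A *m A = c%:M -> c != 0 -> row_free A.
Proof.
move=> AA c_neq0; rewrite row_free_unit.
suff /mulmx1_unit[] : A *m (c^-1 *: A) = 1%:M by [].
by rewrite -scalemxAr AA scale_scalar_mx mulVf.
Qed.

Section InnerProduct.
Variables (R : realType) (n : nat) (G : 'M[R]_n).
Implicit Types (L : 'M[R]_n) (u w : 'rV[R]_n).

Lemma vdotZr a u w : vdot G u (a *: w) = a * vdot G u w.
Proof. by rewrite /vdot linearZ /= -scalemxAr mxE. Qed.

Lemma sub_vperpP L u :
  reflect (forall w, (w <= L)%MS -> vdot G u w = 0) (u <= vperp G L)%MS.
Proof.
apply: (iffP sub_kermxP) => [uGL0 w /submxP[x ->] | uL0].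
  by rewrite /vdot trmx_mul !mulmxA -(mulmxA u) uGL0 mul0mx mxE.
apply/rowP => j; rewrite mulmxA [RHS]mxE -(uL0 _ (row_sub j L)) !mxE /vdot mxE.
by apply: eq_bigr => k _; rewrite !mxE.
Qed.

Hypothesis iG : inner_product G.

Lemma vdot_eq0 u : vdot G u u = 0 -> u = 0.
Proof.
case: iG => _ pos uu0; case: (eqVneq u 0) => // /pos.
by rewrite uu0 ltxx.
Qed.

Lemma row_free_gram : row_free G.
Proof.
rewrite -kermx_eq0; apply/eqP/row_matrixP => i; rewrite row0.
apply: vdot_eq0; have /sub_kermxP rowG0 := row_sub i (kermx G).
by rewrite /vdot rowG0 mul0mx mxE.
Qed.

Lemma mxrank_vperp L : \rank (vperp G L) = (n - \rank L)%N.
Proof.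
rewrite /vperp mxrank_ker -mxrank_tr trmx_mul trmxK.
by case: iG => -> _; rewrite mxrankMfree // row_free_gram.
Qed.

Lemma mxrank_vperp_half L : (\rank L * 2)%N = n -> \rank (vperp G L) = \rank L.
Proof. by move=> rkL; rewrite mxrank_vperp -{1}rkL muln2 -addnn addnK. Qed.

Lemma capmx_vperp L : (L :&: vperp G L)%MS = 0.
Proof.
apply/row_matrixP => i; rewrite row0; apply: vdot_eq0.
have := row_sub i (L :&: vperp G L)%MS.
by rewrite sub_capmx => /andP[rowL /sub_vperpP]; apply.
Qed.

Lemma vperp_complement L :
  mxdirect (L + vperp G L) /\ (L + vperp G L == 1%:M)%MS.
Proof.
have dir : mxdirect (L + vperp G L) by apply/mxdirect_addsP/capmx_vperp.
split=> //; rewrite submx1 sub1mx /row_full mxrank_disjoint_sum ?capmx_vperp //.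
by rewrite mxrank_vperp // subnKC ?eqxx ?rank_leq_row.
Qed.

End InnerProduct.

Section HeisenbergType.
Variables (R : realType) (m n : nat) (G : 'M[R]_n) (J : 'I_m -> 'M[R]_n).
Implicit Types (L : 'M[R]_n) (u w : 'rV[R]_n) (z : 'rV[R]_m).

Definition isotropic L :=
  forall u w, (u <= L)%MS -> (w <= L)%MS -> bracket G J u w = 0.

Lemma zdot_bracket z u w : zdot z (bracket G J u w) = vdot G (u *m Jz J z) w.
Proof.
rewrite /zdot /vdot /Jz mulmx_sumr !mulmx_suml summxE [LHS]mxE.
apply: eq_bigr => k _.
by rewrite -scalemxAr -!scalemxAl [RHS]mxE !mxE /vdot !mxE.
Qed.

Lemma zdot0r z : zdot z 0 = 0.
Proof. by rewrite /zdot trmx0 mulmx0 mxE. Qed.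

Lemma Jz_delta k : Jz J (delta_mx 0 k) = J k.
Proof.
rewrite /Jz (bigD1 k) //= big1 => [|i ik]; rewrite mxE ?eqxx.
  by rewrite scale1r addr0.
by rewrite (negbTE ik) scale0r.
Qed.

Lemma zdot_gt0 z : z != 0 -> 0 < zdot z z.
Proof.
move=> z_neq0; rewrite /zdot mxE lt0r.
have ge0 (i : 'I_m) : true -> 0 <= z 0 i * z^T i 0.
  by rewrite mxE -expr2 sqr_ge0.
rewrite sumr_ge0 // andbT; apply: contra z_neq0 => /eqP zz0.
apply/eqP/rowP => i; have /eqP := psumr_eq0P ge0 zz0 (i := i) isT.
by rewrite !mxE mulf_eq0 orbb => /eqP.
Qed.

Lemma Jz_isotropic_sub_vperp L z :
  isotropic L -> (L *m Jz J z <= vperp G L)%MS.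
Proof.
move=> isoL; apply/row_subP => i; apply/sub_vperpP => w wL.
by rewrite row_mul -zdot_bracket isoL ?row_sub ?zdot0r.
Qed.

Hypothesis hG : heisenberg_type G J.

Lemma row_free_Jz z : z != 0 -> row_free (Jz J z).
Proof.
case: hG => _ Jsq _ z_neq0; apply: (@row_free_sqr_scalar _ _ _ (- zdot z z)).
  by rewrite Jsq raddfN.
by rewrite oppr_eq0 gt_eqF // zdot_gt0.
Qed.

Lemma vdot_JzJz_Jz z u w :
  vdot G (u *m Jz J z *m Jz J z) (w *m Jz J z)
  = zdot z z * vdot G (u *m Jz J z) w.
Proof.
case: hG => _ Jsq skew; rewrite skew -mulmxA Jsq mulmxN mul_mx_scalar.
by rewrite -scaleNr vdotZr mulNr opprK.
Qed.

Lemma Jz_lagrangian_eq_vperp L z :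
  lagrangian G J L -> z != 0 -> (L *m Jz J z == vperp G L)%MS.
Proof.
case: hG => iG _ _ [isoL rkL] z_neq0.
rewrite -(mxrank_leqif_eq (Jz_isotropic_sub_vperp z isoL)).2.
by rewrite mxrankMfree ?row_free_Jz // mxrank_vperp_half.
Qed.

Lemma vperp_isotropic L : lagrangian G J L -> isotropic (vperp G L).
Proof.
move=> lagL u w uP wP; apply/rowP => k; rewrite !mxE.
have e_neq0 : delta_mx 0 k != 0 :> 'rV[R]_m.
  by apply/eqP => /rowP/(_ k)/eqP; rewrite !mxE !eqxx oner_eq0.
have /andP[_ vperpJL] := Jz_lagrangian_eq_vperp lagL e_neq0.
move: (submx_trans uP vperpJL) (submx_trans wP vperpJL).
move=> /submxP[x ->] /submxP[y ->].
rewrite !mulmxA -Jz_delta vdot_JzJz_Jz -zdot_bracket (proj1 lagL) ?submxMl //.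
by rewrite zdot0r mulr0.
Qed.

End HeisenbergType.

Theorem proposition4p1 (R : realType) (m n : nat) (G : 'M[R]_n)
  (J : 'I_m -> 'M[R]_n) (L : 'M[R]_n) :
  heisenberg_type G J -> lagrangian G J L ->
  [/\ lagrangian G J (vperp G L),
      mxdirect (L + vperp G L) /\ (L + vperp G L == 1%:M)%MS &
      forall z : 'rV[R]_m, z != 0 -> (L *m Jz J z == vperp G L)%MS].
Proof.
move=> hG lagL; have [iG _ _] := hG; have [_ rkL] := lagL.
split; [split | exact: vperp_complement | ].
- exact: vperp_isotropic.
- by rewrite mxrank_vperp_half.
- by move=> z; apply: Jz_lagrangian_eq_vperp.
Qed.
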